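(* Let $A$ be a real $m\times n$ matrix with $r:=\operatorname{rank}(A)<n$, $k:=n-r$, $\beta\in\mathbb R_m$, $y\in\mathbb R_n$ with $Ay^T=\beta^T$, and $F\in S(A,\beta)$. Let $(x_1^T,\dots,x_k^T)$ be a basis of $\ker(A)$, $X$ the $k\times n$ matrix with rows $x_1,\dots,x_k$, $\pi_s(u):=u^{x_s}$ for $u\in\mathbb R_n^+$, $\psi(w):=\exp(X^\dagger\log(w)^T)$ and $G(w):=F(\psi(w))/\psi(w)^y$ for $w\in\mathbb R_k^+$. Then $F(v)=G(\pi_1(v),\dots,\pi_k(v))v^y$ for all $v\in\mathbb R_n^+$, and $G$ is the unique function $H:\mathbb R_k^+\to\mathbb R$ such that $F(v)=H(\pi_1(v),\dots,\pi_k(v))v^y$ for every $v\in\mathbb R_n^+$.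
   Context: $\mathbb R_m$ denotes real row vectors of length $m$, $\mathbb R_m^+$ those with all entries strictly positive (similarly for $n,k$). For $c\in\mathbb R_m^+$, $\alpha\in\mathbb R_m$, $c^\alpha:=\prod_i c_i^{\alpha_i}$. For positive row vector $w$, $\log(w)$ is taken entrywise (as a row vector); for a column vector $z$, $\exp(z)$ is the row vector of entrywise exponentials. $B^\dagger$ is the Moore–Penrose pseudoinverse. For a real $m\times n$ matrix $A$ with columns $\alpha_1^T,\dots,\alpha_n^T$ and $\beta\in\mathbb R_m$, $S(A,\beta)$ is the set of all $F:\mathbb R_n^+\to\mathbb R$ with $F(v_1c^{\alpha_1},\dots,v_nc^{\alpha_n})=F(v_1,\dots,v_n)c^\beta$ for all $v_1,\dots,v_n>0$ and all $c\in\mathbb R_m^+$. *)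

From Stdlib Require Import Reals.
From mathcomp Require Import ssreflect ssrfun ssrbool eqtype ssrnat seq fintype bigop.

Set Implicit Arguments.
Unset Strict Implicit.
Unset Printing Implicit Defensive.

Local Open Scope R_scope.

(* vectors in R_n are functions 'I_n -> R ; m x n matrices are 'I_m -> 'I_n -> R *)
Definition rsum (n : nat) (f : 'I_n -> R) : R := \big[Rplus/R0]_(i < n) f i.
Definition rprod (n : nat) (f : 'I_n -> R) : R := \big[Rmult/R1]_(i < n) f i.

Definition posvec (n : nat) (v : 'I_n -> R) : Prop := forall i, 0 < v i.

Definition vpow (n : nat) (c alpha : 'I_n -> R) : R :=
  rprod (fun i => Rpower (c i) (alpha i)).

Definition inS (m n : nat) (A : 'I_m -> 'I_n -> R) (beta : 'I_m -> R)
  (F : ('I_n -> R) -> R) : Prop :=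
  forall v : 'I_n -> R, posvec v ->
  forall c : 'I_m -> R, posvec c ->
    F (fun j => v j * vpow c (fun i => A i j)) = F v * vpow c beta.

Definition lin_indep (p q : nat) (vs : 'I_p -> 'I_q -> R) : Prop :=
  forall c : 'I_p -> R, (forall j, rsum (fun s => c s * vs s j) = 0) ->
  forall s, c s = 0.

Definition is_rank (m n : nat) (A : 'I_m -> 'I_n -> R) (r : nat) : Prop :=
  (exists f : 'I_r -> 'I_n, lin_indep (fun s i => A i (f s))) /\
  (forall f : 'I_r.+1 -> 'I_n, ~ lin_indep (fun s i => A i (f s))).

Definition in_ker (m n : nat) (A : 'I_m -> 'I_n -> R) (z : 'I_n -> R) : Prop :=
  forall i, rsum (fun j => A i j * z j) = 0.

Definition is_ker_basis (m n k : nat) (A : 'I_m -> 'I_n -> R)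
  (x : 'I_k -> 'I_n -> R) : Prop :=
  (forall s, in_ker A (x s)) /\ lin_indep x /\
  (forall z, in_ker A z -> exists c : 'I_k -> R,
       forall j, z j = rsum (fun s => c s * x s j)).

Definition mxmul (a b c : nat) (M : 'I_a -> 'I_b -> R) (N : 'I_b -> 'I_c -> R)
  : 'I_a -> 'I_c -> R := fun i l => rsum (fun j => M i j * N j l).

(* P is the Moore-Penrose pseudoinverse of X (Penrose equations; unique) *)
Definition is_pinv (k n : nat) (X : 'I_k -> 'I_n -> R) (P : 'I_n -> 'I_k -> R)
  : Prop :=
  (forall i j, mxmul X (mxmul P X) i j = X i j) /\
  (forall i j, mxmul P (mxmul X P) i j = P i j) /\
  (forall i j, mxmul X P i j = mxmul X P j i) /\
  (forall i j, mxmul P X i j = mxmul P X j i).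

Definition psi (k n : nat) (P : 'I_n -> 'I_k -> R) (w : 'I_k -> R) : 'I_n -> R :=
  fun j => exp (rsum (fun s => P j s * ln (w s))).

Definition piv (k n : nat) (x : 'I_k -> 'I_n -> R) (u : 'I_n -> R) : 'I_k -> R :=
  fun s => vpow u (x s).

(* Work in logarithmic coordinates: [ln (v^e)] is the dot product of [e] with [ln v], so
   the action [v |-> v c^A] translates [ln v] by a vector of the row space of [A], and
   [pi] reads off the coordinates [X ln v].  Since [X X^+ X = X], the vector
   [ln v - X^+ X ln v] is killed by [X], hence orthogonal to [ker A], hence in the row
   space of [A]: so [v] lies in the orbit of [psi (pi v)], and [F v / v^y] is constant
   on orbits.  Uniqueness follows from [pi (psi w) = w], i.e. [X X^+ = 1], which holds
   because the rows of [X] are independent. *)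
From Stdlib Require Import Reals FunctionalExtensionality.
From mathcomp Require Import all_boot all_algebra.
From mathcomp Require Import Rstruct.
Import GRing.Theory.

Set Implicit Arguments.
Unset Strict Implicit.
Unset Printing Implicit Defensive.

Local Open Scope ring_scope.

Lemma rsumE n (f : 'I_n -> R) : rsum f = \sum_(i < n) f i. Proof. by []. Qed.

Lemma vpowE n (u e : 'I_n -> R) : vpow u e = exp (\sum_j e j * ln (u j)).
Proof. by rewrite /vpow /rprod (big_morph exp exp_plus exp_0). Qed.

Lemma vpow_gt0 n (u e : 'I_n -> R) : Rlt 0 (vpow u e).
Proof. by rewrite vpowE; apply: exp_pos. Qed.

Lemma ln_vpow n (u e : 'I_n -> R) : ln (vpow u e) = \sum_j e j * ln (u j).
Proof. by rewrite vpowE ln_exp. Qed.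

Lemma posvec_psi k n (P : 'I_n -> 'I_k -> R) (w : 'I_k -> R) : posvec (psi P w).
Proof. by move=> j; apply: exp_pos. Qed.

Lemma sum_mul_sumA p q (f : 'I_p -> R) (M : 'I_p -> 'I_q -> R) (g : 'I_q -> R) :
  \sum_j f j * (\sum_t M j t * g t) = \sum_t (\sum_j f j * M j t) * g t.
Proof.
under eq_bigr do rewrite mulr_sumr.
under [RHS]eq_bigr do rewrite mulr_suml.
by rewrite exchange_big; apply: eq_bigr => t _; apply: eq_bigr => j _; rewrite mulrA.
Qed.

Lemma sum_delta p (s : 'I_p) (f : 'I_p -> R) : \sum_t (s == t)%:R * f t = f s.
Proof.
rewrite (bigD1 s) //= eqxx mul1r big1 ?addr0 // => t ts.
by rewrite eq_sym (negbTE ts) mul0r.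
Qed.

Definition scale_by m n (A : 'I_m -> 'I_n -> R) (c : 'I_m -> R) (v : 'I_n -> R) :
  'I_n -> R := fun j => v j * vpow c (fun i => A i j).

Lemma inS_vpow m n (A : 'I_m -> 'I_n -> R) (beta : 'I_m -> R) (y : 'I_n -> R) :
  (forall i, rsum (fun j => A i j * y j) = beta i) -> inS A beta (fun v => vpow v y).
Proof.
move=> hy v hv c hc; rewrite !vpowE -exp_plus; congr exp.
under eq_bigr => j _ do rewrite (ln_mult _ _ (hv j) (vpow_gt0 _ _)) ln_vpow mulrDr.
rewrite big_split /=; congr (_ + _).
rewrite sum_mul_sumA; apply: eq_bigr => i _.
by rewrite -hy rsumE; congr (_ * _); apply: eq_bigr => j _; rewrite mulrC.
Qed.

Section Ratio.
Local Open Scope R_scope.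

Lemma inS_ratio_invariant m n (A : 'I_m -> 'I_n -> R) (beta : 'I_m -> R)
    (F Phi : ('I_n -> R) -> R) :
  inS A beta F -> inS A beta Phi -> (forall v, posvec v -> Phi v <> 0) ->
  forall v c, posvec v -> posvec c ->
  F (scale_by A c v) / Phi (scale_by A c v) = F v / Phi v.
Proof.
move=> hF hPhi Phi_neq0 v c hv hc.
rewrite /scale_by hF // hPhi //.
have := Phi_neq0 v hv; have := Rgt_not_eq _ _ (vpow_gt0 c beta).
by move=> ? ?; field.
Qed.

End Ratio.

Lemma orthogonal_ker_in_rowspace m n (A : 'I_m -> 'I_n -> R) (z : 'I_n -> R) :
  (forall u, in_ker A u -> rsum (fun j => z j * u j) = 0) ->
  exists t : 'I_m -> R, forall j, z j = rsum (fun i => t i * A i j).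
Proof.
move=> hz.
pose Am := \matrix_(i, j) A i j : 'M[R]_(m, n).
pose K := kermx Am^T.
have KA0 : K *m Am^T = 0 by apply: mulmx_ker.
have K_ker i : in_ker A (fun j => K i j).
  move=> i'; have := congr1 (fun M : 'M[R]_(n, m) => M i i') KA0.
  rewrite !mxE rsumE => KA0ii'; rewrite -[RHS]KA0ii'; apply: eq_bigr => j _.
  by rewrite !mxE mulrC.
pose zr := \row_j z j : 'rV[R]_n.
have zK0 : zr *m K^T = 0.
  apply/matrixP => i0 i; rewrite !mxE -[RHS](hz _ (K_ker i)).
  by apply: eq_bigr => j _; rewrite !mxE.
(* [ker (K^T)] contains the row space of [Am] and has the same rank, so equals it. *)
have Am_sub : (Am <= kermx K^T)%MS.
  by rewrite sub_kermx -[Am]trmxK -trmx_mul KA0 trmx0.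
have sub_Am : (kermx K^T <= Am)%MS.
  rewrite -(mxrank_leqif_sup Am_sub).2.
  rewrite mxrank_ker mxrank_tr mxrank_ker mxrank_tr.
  by rewrite subKn ?rank_leq_col.
have zr_Am : (zr <= Am)%MS by apply: submx_trans sub_Am; rewrite sub_kermx zK0.
exists (fun i => (zr *m pinvmx Am) 0 i) => j.
have := congr1 (fun M : 'rV[R]_n => M 0 j) (mulmxKpV zr_Am).
by rewrite !mxE /= => <-; apply: eq_bigr => i _; rewrite !mxE.
Qed.

Section GeneralizedInverse.
Variables (k n : nat) (x : 'I_k -> 'I_n -> R) (P : 'I_n -> 'I_k -> R).
Hypothesis xPx : forall s l, mxmul x (mxmul P x) s l = x s l.

Lemma mxmul_ginv_id : lin_indep x -> forall s t, mxmul x P s t = (s == t)%:R.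
Proof.
move=> x_indep s.
pose d t := mxmul x P s t - (s == t)%:R.
suff d0 : forall l, rsum (fun t => d t * x t l) = 0.
  by move=> t; apply/eqP; rewrite -subr_eq0; apply/eqP; apply: (x_indep d d0).
move=> l; rewrite rsumE /d.
under eq_bigr do rewrite mulrBl.
rewrite sumrB sum_delta.
by rewrite -[X in _ - X](xPx s l) /mxmul !rsumE sum_mul_sumA subrr.
Qed.

Lemma piv_psi : lin_indep x -> forall w, posvec w -> piv x (psi P w) = w.
Proof.
move=> x_indep w hw; apply: functional_extensionality => s.
rewrite /piv vpowE -[RHS]exp_ln //; congr exp.
under eq_bigr do rewrite /psi ln_exp rsumE.
have xP t : \sum_j x s j * P j t = (s == t)%:R := mxmul_ginv_id x_indep s t.
by rewrite sum_mul_sumA; under eq_bigr do rewrite xP; rewrite sum_delta.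
Qed.

Lemma ker_x_sub_ginv_proj (a : 'I_n -> R) s :
  \sum_j x s j * (a j - \sum_t P j t * (\sum_l x t l * a l)) = 0.
Proof.
have xPx' l : \sum_t (\sum_j x s j * P j t) * x t l = x s l.
  by rewrite -sum_mul_sumA; apply: xPx.
under eq_bigr do rewrite mulrBr.
rewrite sumrB 2!sum_mul_sumA.
by under [X in _ - X]eq_bigr do rewrite xPx'; rewrite subrr.
Qed.

End GeneralizedInverse.

Lemma scale_psi_piv m n k (A : 'I_m -> 'I_n -> R) (x : 'I_k -> 'I_n -> R)
    (P : 'I_n -> 'I_k -> R) :
  (forall s l, mxmul x (mxmul P x) s l = x s l) ->
  (forall z, in_ker A z -> exists c : 'I_k -> R,
       forall j, z j = rsum (fun s => c s * x s j)) ->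
  forall v, posvec v -> exists2 c, posvec c & scale_by A c (psi P (piv x v)) = v.
Proof.
move=> xPx x_span v hv.
pose a j := ln (v j).
pose z j := a j - \sum_t P j t * (\sum_l x t l * a l).
have [t ht] : exists t : 'I_m -> R, forall j, z j = rsum (fun i => t i * A i j).
  apply: orthogonal_ker_in_rowspace => u /x_span [c hc].
  rewrite rsumE; under eq_bigr do rewrite hc rsumE mulrC mulr_suml.
  rewrite exchange_big big1 // => s _.
  under eq_bigr do rewrite -mulrA.
  by rewrite -mulr_sumr /z (ker_x_sub_ginv_proj xPx a s) mulr0.
exists (fun i => exp (t i)) => [i|]; first exact: exp_pos.
apply: functional_extensionality => j.
rewrite /scale_by /psi vpowE -[_ * _]exp_plus -[RHS]exp_ln //; congr exp.
have -> : \sum_i A i j * ln (exp (t i)) = z j.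
  by rewrite ht rsumE; apply: eq_bigr => i _; rewrite ln_exp mulrC.
have -> : rsum (fun s => P j s * ln (piv x v s)) = \sum_t P j t * (\sum_l x t l * a l).
  by apply: eq_bigr => s _; rewrite /piv ln_vpow.
by rewrite -[Rplus]/(@GRing.add R) /z addrC subrK.
Qed.

Local Close Scope ring_scope.
Local Open Scope R_scope.

Theorem mainTheorem5 (m n : nat) (A : 'I_m -> 'I_n -> R) (r k : nat)
  (hr : is_rank A r) (hrn : (r < n)%N) (hk : k = (n - r)%N)
  (beta : 'I_m -> R) (y : 'I_n -> R)
  (hy : forall i, rsum (fun j => A i j * y j) = beta i)
  (F : ('I_n -> R) -> R) (hF : inS A beta F)
  (x : 'I_k -> 'I_n -> R) (hx : is_ker_basis A x)
  (Xd : 'I_n -> 'I_k -> R) (hXd : is_pinv x Xd) :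
  let G := fun w : 'I_k -> R => F (psi Xd w) / vpow (psi Xd w) y in
  (forall v : 'I_n -> R, posvec v -> F v = G (piv x v) * vpow v y) /\
  (forall H : ('I_k -> R) -> R,
     (forall v : 'I_n -> R, posvec v -> F v = H (piv x v) * vpow v y) ->
     forall w : 'I_k -> R, posvec w -> H w = G w).
Proof.
move=> G; have [_ [x_indep x_span]] := hx; have [xPx _] := hXd.
have vpow_neq0 v : vpow v y <> 0 by apply: Rgt_not_eq; apply: vpow_gt0.
split.
- move=> v hv; have [c hc hvc] := scale_psi_piv xPx x_span hv.
  rewrite /G -(inS_ratio_invariant hF (inS_vpow hy) (fun v _ => vpow_neq0 v)
                 (posvec_psi _ _) hc) hvc.
  by rewrite /Rdiv Rmult_assoc Rinv_l // Rmult_1_r.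
- move=> H hH w hw.
  rewrite /G (hH _ (posvec_psi _ _)) piv_psi //.
  by rewrite /Rdiv Rmult_assoc Rinv_r // Rmult_1_r.
Qed.
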